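(* Let $I\subseteq\mathbb{R}$ be an interval, $f:I\to\mathbb{R}$ differentiable on the interior $I^\circ$, and $a,b\in I^\circ$ with $a<b$, $f'\in L[a,b]$. Let $g:[a,b]\to\mathbb{R}$ be continuous, $\alpha>0$, $q>1$ and $p=\frac{q}{q-1}$ (so $1/p+1/q=1$). If $|f'|^q$ is convex on $[a,b]$, then, with $m=\frac{a+b}{2}$, $$\left|f(m)\left[J^{\alpha}_{m-}g(a)+J^{\alpha}_{m+}g(b)\right]-\left[J^{\alpha}_{m-}(fg)(a)+J^{\alpha}_{m+}(fg)(b)\right]\right|$$ $$\le \frac{\|g\|_{[a,b],\infty}(b-a)^{\alpha+1}}{2^{\alpha+1+\frac2q}(\alpha p+1)^{1/p}\Gamma(\alpha+1)}\left[\big(3|f'(a)|^q+|f'(b)|^q\big)^{1/q}+\big(|f'(a)|^q+3|f'(b)|^q\big)^{1/q}\right].$$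
   Context: For $\alpha>0$ and an integrable function $h$, the Riemann–Liouville fractional integrals are $J^{\alpha}_{c+}h(x)=\frac{1}{\Gamma(\alpha)}\int_c^x (x-t)^{\alpha-1}h(t)\,dt$ for $x>c$, and $J^{\alpha}_{c-}h(x)=\frac{1}{\Gamma(\alpha)}\int_x^c (t-x)^{\alpha-1}h(t)\,dt$ for $x<c$, where $\Gamma$ is the Gamma function. Thus, with $m=\frac{a+b}{2}$, $J^{\alpha}_{m-}h(a)=\frac{1}{\Gamma(\alpha)}\int_a^{m}(t-a)^{\alpha-1}h(t)\,dt$ and $J^{\alpha}_{m+}h(b)=\frac{1}{\Gamma(\alpha)}\int_{m}^{b}(b-t)^{\alpha-1}h(t)\,dt$. Here $fg$ denotes the pointwise product. For a continuous $g$ and an interval $[c,d]$, $\|g\|_{[c,d],\infty}=\sup_{x\in[c,d]}|g(x)|$. *)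

From Stdlib Require Import Reals Lra Classical ClassicalEpsilon ClassicalDescription.
Open Scope R_scope.

(* Riemann integral of F from c to d: the value RiemannInt pr for any
   integrability proof pr (independent of pr by RiemannInt_P5); an
   unspecified value if F is not Riemann integrable there. *)
Definition Rint (F : R -> R) (c d : R) : R :=
  epsilon (inhabits 0) (fun v =>
    exists pr : Riemann_integrable F c d, RiemannInt pr = v).

Definition improper_left (F : R -> R) (c d : R) : R :=
  epsilon (inhabits 0) (fun l => forall eps, eps > 0 ->
    exists delta, delta > 0 /\
      forall x, c < x < c + delta -> Rabs (Rint F x d - l) < eps).

Definition improper_right (F : R -> R) (c d : R) : R :=
  epsilon (inhabits 0) (fun l => forall eps, eps > 0 ->
    exists delta, delta > 0 /\
      forall x, d - delta < x < d -> Rabs (Rint F c x - l) < eps).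

Definition Gamma (s : R) : R :=
  epsilon (inhabits 0) (fun l =>
    Un_cv (fun n => Rint (fun t => Rpower t (s - 1) * exp (- t))
                          (/ INR (S n)) (INR (S n))) l).

(* Power x^y for x >= 0, with the convention 0^y = 0 (y > 0). *)
Definition rpow (x y : R) : R :=
  if Rle_dec x 0 then 0 else Rpower x y.

(* Riemann-Liouville fractional integrals
   J^al_{c+} h (x) = 1/Gamma(al) int_c^x (x-t)^(al-1) h(t) dt   (x > c)
   J^al_{c-} h (x) = 1/Gamma(al) int_x^c (t-x)^(al-1) h(t) dt   (x < c) *)
Definition RL_plus (al : R) (h : R -> R) (c x : R) : R :=
  / Gamma al * improper_right (fun t => Rpower (x - t) (al - 1) * h t) c x.

Definition RL_minus (al : R) (h : R -> R) (c x : R) : R :=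
  / Gamma al * improper_left (fun t => Rpower (t - x) (al - 1) * h t) x c.

Definition supnorm (g : R -> R) (c d : R) : R :=
  epsilon (inhabits 0) (fun s =>
    is_lub (fun y => exists x, c <= x <= d /\ y = Rabs (g x)) s).

Definition is_interval (I : R -> Prop) : Prop :=
  forall x y z, I x -> I z -> x <= y <= z -> I y.

Definition convex_on (h : R -> R) (c d : R) : Prop :=
  forall x y l, c <= x <= d -> c <= y <= d -> 0 <= l <= 1 ->
    h (l * x + (1 - l) * y) <= l * h x + (1 - l) * h y.

From Stdlib Require Import Reals Lra ZArith ClassicalEpsilon FunctionalExtensionality.
From Coquelicot Require Import Coquelicot.
Open Scope R_scope.

(* Up to the factor 1/Gamma(al), the left half of the bracket is the integral of
   (t - a)^(al-1) g(t) (f(m) - f(t)) over (a, m], and the right half is the same expression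
   for the reflections t |-> a + b - t.  On (a, m], |f(m) - f(t)| <= int_t^m l for any
   continuous majorant l of |f'|; integrating by parts against (t - a)^(al-1) and applying
   Hölder's inequality bounds the half by ||g|| ||(t - a)^al / al||_p ||l||_q.  Convexity puts
   |f'|^q below its chord, so l = (chord + e)^(1/q) gives
   int_a^m l^q = (b - a)/8 (3|f'(a)|^q + |f'(b)|^q + 4e), and e -> 0 concludes. *)

(* Coquelicot states integrand equalities over its normed-module carrier; ring and field
   need them as equalities in R. *)
Ltac R_eq := cbv beta; match goal with |- @eq _ ?x ?y => change (@eq R x y) end.

Lemma exp_le_compat (x y : R) : x <= y -> exp x <= exp y.
Proof. intros [H|H]; [apply Rlt_le, exp_increasing | subst]; lra. Qed.

Lemma Rpower_continuous (x y : R) : 0 < x -> continuous (fun t => Rpower t y) x.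
Proof.
  intros Hx. apply continuity_pt_filterlim, derivable_continuous_pt.
  exists (y * Rpower x (y - 1)). now apply derivable_pt_lim_power.
Qed.

Lemma continuous_Rpower_comp (u : R -> R) (y t : R) :
  continuous u t -> 0 < u t -> continuous (fun s => Rpower (u s) y) t.
Proof.
  intros Hc Hp. apply (continuous_comp u (fun x => Rpower x y)); auto.
  now apply Rpower_continuous.
Qed.

Lemma Rpower_Rinv_K (x y : R) : 0 < x -> y <> 0 -> Rpower (Rpower x (/ y)) y = x.
Proof.
  intros. rewrite Rpower_mult, Rinv_l by auto. now apply Rpower_1.
Qed.

Lemma Rpower_small (y eps : R) : 0 < y -> 0 < eps ->
  exists d, 0 < d /\ forall x, 0 < x < d -> Rpower x y < eps.
Proof.
  intros Hy He. exists (Rpower eps (/ y)). split; [apply exp_pos |].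
  intros x Hx. rewrite <- (Rpower_Rinv_K eps y) by lra.
  apply Rlt_Rpower_l; auto.
Qed.

Lemma rpow_nonneg (x y : R) : 0 <= rpow x y.
Proof. unfold rpow. destruct Rle_dec; [lra | apply Rlt_le, exp_pos]. Qed.

Lemma rpow_right_continuous (c y eta : R) : 0 <= c -> 0 < y -> 0 < eta ->
  exists d, 0 < d /\ forall e, 0 < e < d -> Rpower (c + e) y < rpow c y + eta.
Proof.
  intros Hc Hy He. unfold rpow. destruct Rle_dec as [Hc0|Hc0].
  - replace c with 0 by lra. destruct (Rpower_small y eta Hy He) as [d [Hd Hd']].
    exists d. split; auto. intros e Hed. rewrite Rplus_0_l. specialize (Hd' e Hed). lra.
  - pose proof (Rpower_continuous c y ltac:(lra)) as C.
    apply continuity_pt_filterlim in C. destruct (C eta He) as [d [Hd Hd']].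
    exists d. split; auto. intros e Hed.
    assert (Hdist : R_dist (Rpower (c + e) y) (Rpower c y) < eta).
    { apply Hd'. split; [split; [exact I | lra] |].
      simpl. unfold R_dist. replace (c + e - c) with e by ring. rewrite Rabs_right; lra. }
    apply Rabs_def2 in Hdist. lra.
Qed.

Lemma conjugate_exponent (q : R) : 1 < q ->
  1 < q / (q - 1) /\ / (q / (q - 1)) + / q = 1.
Proof.
  intros Hq. split.
  - apply (Rmult_lt_reg_r (q - 1)); [lra |].
    unfold Rdiv. rewrite Rmult_assoc, Rinv_l; lra.
  - field. lra.
Qed.

Lemma exp_convex (l x y : R) : 0 <= l <= 1 ->
  exp (l * x + (1 - l) * y) <= l * exp x + (1 - l) * exp y.
Proof.
  intros Hl. set (z := l * x + (1 - l) * y).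
  assert (Ex : exp x = exp z * exp (x - z)) by (rewrite <- exp_plus; f_equal; ring).
  assert (Ey : exp y = exp z * exp (y - z)) by (rewrite <- exp_plus; f_equal; ring).
  pose proof (exp_ineq1_le (x - z)). pose proof (exp_ineq1_le (y - z)).
  pose proof (exp_pos z). rewrite Ex, Ey.
  assert (l * (exp z * (1 + (x - z))) <= l * (exp z * exp (x - z)))
    by (apply Rmult_le_compat_l, Rmult_le_compat_l; lra).
  assert ((1 - l) * (exp z * (1 + (y - z))) <= (1 - l) * (exp z * exp (y - z)))
    by (apply Rmult_le_compat_l, Rmult_le_compat_l; lra).
  assert (l * (exp z * (1 + (x - z))) + (1 - l) * (exp z * (1 + (y - z))) = exp z)
    by (unfold z; ring).
  lra.
Qed.

Lemma young (X Y p q : R) : 0 < X -> 0 < Y -> 1 < p -> 1 < q -> / p + / q = 1 ->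
  X * Y <= Rpower X p / p + Rpower Y q / q.
Proof.
  intros HX HY Hp Hq Hpq.
  assert (Hip : 0 <= / p <= 1).
  { split; [apply Rlt_le, Rinv_0_lt_compat; lra |].
    rewrite <- Rinv_1. apply Rlt_le, Rinv_lt_contravar; lra. }
  pose proof (exp_convex (/ p) (p * ln X) (q * ln Y) Hip) as H.
  replace (1 - / p) with (/ q) in H by lra.
  replace (/ p * (p * ln X) + / q * (q * ln Y)) with (ln X + ln Y) in H by (field; lra).
  rewrite exp_plus, !exp_ln in H by auto.
  unfold Rpower, Rdiv. lra.
Qed.

Lemma Rint_RInt (F : R -> R) (c d : R) : ex_RInt F c d -> Rint F c d = RInt F c d.
Proof.
  intros H. unfold Rint.
  destruct (epsilon_spec (inhabits 0)
              (fun v => exists pr : Riemann_integrable F c d, RiemannInt pr = v))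
    as [pr Hpr].
  - exists (RiemannInt (ex_RInt_Reals_0 _ _ _ H)). now eexists.
  - rewrite <- Hpr. symmetry. apply RInt_Reals.
Qed.

Lemma ex_RInt_continuous_on (F : R -> R) (c d : R) : c <= d ->
  (forall t, c <= t <= d -> continuous F t) -> ex_RInt F c d.
Proof.
  intros Hcd H. apply (ex_RInt_continuous (V := R_CompleteNormedModule)).
  intros z. rewrite Rmin_left, Rmax_right by lra. auto.
Qed.

Lemma abs_RInt_le_continuous (u v : R -> R) (c d : R) : c <= d ->
  (forall t, c <= t <= d -> continuous u t /\ continuous v t) ->
  (forall t, c < t < d -> Rabs (u t) <= v t) ->
  Rabs (RInt u c d) <= RInt v c d.
Proof.
  intros Hcd H Huv.
  eapply Rle_trans; [apply abs_RInt_le; [lra |] |].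
  - apply ex_RInt_continuous_on; [lra |]. apply H.
  - apply RInt_le; [lra | | | exact Huv]; apply ex_RInt_continuous_on; auto; intros t Ht.
    + apply (continuous_comp u Rabs); [apply H; auto | apply continuous_Rabs].
    + apply H, Ht.
Qed.

Lemma RInt_lincomb (F G : R -> R) (A B c d : R) : ex_RInt F c d -> ex_RInt G c d ->
  RInt (fun t => A * F t + B * G t) c d = A * RInt F c d + B * RInt G c d.
Proof.
  intros HF HG. apply is_RInt_unique.
  exact (is_RInt_plus _ _ _ _ _ _ (is_RInt_scal _ _ _ A _ (RInt_correct _ _ _ HF))
                                  (is_RInt_scal _ _ _ B _ (RInt_correct _ _ _ HG))).
Qed.

Lemma RInt_scal_l (F : R -> R) (A c d : R) : ex_RInt F c d ->
  RInt (fun t => A * F t) c d = A * RInt F c d.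
Proof.
  intros HF. apply is_RInt_unique. exact (is_RInt_scal _ _ _ A _ (RInt_correct _ _ _ HF)).
Qed.

Lemma RInt_reflect (F : R -> R) (c x y : R) : ex_RInt F x y ->
  RInt F x y = RInt (fun s => F (c - s)) (c - y) (c - x).
Proof.
  intros Hex. symmetry. apply (is_RInt_unique (V := R_CompleteNormedModule)).
  assert (H0 : is_RInt F (-1 * (c - x) + c) (-1 * (c - y) + c) (RInt F x y)).
  { replace (-1 * (c - x) + c) with x by ring. replace (-1 * (c - y) + c) with y by ring.
    now apply (RInt_correct (V := R_CompleteNormedModule)). }
  pose proof (is_RInt_opp _ _ _ _ (is_RInt_swap _ _ _ _
                (is_RInt_comp_lin F (-1) c (c - x) (c - y) _ H0))) as H1.
  rewrite <- (opp_opp (RInt F x y)).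
  eapply is_RInt_ext; [| exact H1].
  intros s _. unfold opp, scal; simpl; unfold mult; simpl.
  replace (-1 * s + c) with (c - s) by ring. ring.
Qed.

Lemma is_derive_Rpower_shift (a c t : R) : a < t -> c <> 0 ->
  is_derive (fun s => Rpower (s - a) c / c) t (Rpower (t - a) (c - 1)).
Proof.
  intros Ht Hc. apply is_derive_Reals.
  replace (Rpower (t - a) (c - 1)) with (c * Rpower (t - a) (c - 1) * 1 * / c)
    by (field; auto).
  apply (derivable_pt_lim_scal_right (fun s => Rpower (s - a) c)).
  apply (derivable_pt_lim_comp (fun s => s - a) (fun s => Rpower s c)).
  - replace 1 with (1 - 0) by ring.
    apply derivable_pt_lim_minus; [apply derivable_pt_lim_id | apply derivable_pt_lim_const].
  - apply derivable_pt_lim_power. lra.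
Qed.

Lemma continuous_const_minus (c t : R) : continuous (fun s => c - s) t.
Proof.
  apply (continuous_minus (fun _ => c) (fun s => s));
    [apply continuous_const | apply continuous_id].
Qed.

Lemma continuous_Rpower_shift (a c t : R) : a < t ->
  continuous (fun s => Rpower (s - a) c) t.
Proof.
  intros Ht. apply (continuous_Rpower_comp (fun s => s - a)); [| lra].
  apply (continuous_minus (fun s => s) (fun _ => a));
    [apply continuous_id | apply continuous_const].
Qed.

Lemma RInt_Rpower_shift (a c x y : R) : a < x <= y -> c <> 0 ->
  RInt (fun t => Rpower (t - a) (c - 1)) x y = (Rpower (y - a) c - Rpower (x - a) c) / c.
Proof.
  intros Hxy Hc. apply is_RInt_unique.
  replace ((Rpower (y - a) c - Rpower (x - a) c) / c)
    with (minus (Rpower (y - a) c / c) (Rpower (x - a) c / c))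
    by (unfold minus, plus, opp; simpl; field; auto).
  apply (is_RInt_derive (fun s => Rpower (s - a) c / c));
    intros z; rewrite Rmin_left, Rmax_right by lra; intros Hz.
  - apply is_derive_Rpower_shift; auto; lra.
  - apply continuous_Rpower_shift; lra.
Qed.

Lemma ex_RInt_Rpower_shift_mult (h : R -> R) (a al x y : R) : a < x <= y ->
  (forall t, x <= t <= y -> continuous h t) ->
  ex_RInt (fun t => Rpower (t - a) (al - 1) * h t) x y.
Proof.
  intros Hxy Hh. apply ex_RInt_continuous_on; [lra |]. intros t Ht.
  apply (continuous_mult (fun t => Rpower (t - a) (al - 1)) h);
    [apply continuous_Rpower_shift; lra | auto].
Qed.

Lemma abs_RInt_Rpower_shift_mult_le (h : R -> R) (a al x y M : R) : a < x <= y -> 0 < al ->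
  (forall t, x <= t <= y -> continuous h t /\ Rabs (h t) <= M) ->
  Rabs (RInt (fun t => Rpower (t - a) (al - 1) * h t) x y) <= M * (Rpower (y - a) al / al).
Proof.
  intros Hxy Hal H.
  assert (Cw : forall t, x <= t <= y -> continuous (fun s => Rpower (s - a) (al - 1)) t)
    by (intros; apply continuous_Rpower_shift; lra).
  apply Rle_trans with (RInt (fun t => M * Rpower (t - a) (al - 1)) x y).
  - apply abs_RInt_le_continuous; [lra | |].
    + intros t Ht. split.
      * apply (continuous_mult (fun t => Rpower (t - a) (al - 1)) h); [auto | apply H; auto].
      * apply (continuous_scal_r M (fun t => Rpower (t - a) (al - 1))). auto.
    + intros t Ht. rewrite Rabs_mult, (Rabs_right (Rpower _ _))
        by (apply Rle_ge, Rlt_le, exp_pos).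
      rewrite Rmult_comm. apply Rmult_le_compat_r; [apply Rlt_le, exp_pos | apply H; lra].
  - rewrite RInt_scal_l, RInt_Rpower_shift by (lra || (apply ex_RInt_continuous_on; auto; lra)).
    assert (HM : 0 <= M) by (pose proof (Rabs_pos (h y)); destruct (H y); lra).
    apply Rmult_le_compat_l; [lra |]. unfold Rdiv.
    apply Rmult_le_compat_r; [apply Rlt_le, Rinv_0_lt_compat; lra |].
    pose proof (exp_pos (al * ln (x - a))). unfold Rpower in *. lra.
Qed.

Lemma Rpower_div_Rpower_inv (x P p : R) : 0 < x -> 0 < P -> p <> 0 ->
  Rpower (x / Rpower P (/ p)) p = Rpower x p / P.
Proof.
  intros Hx HP Hp. unfold Rpower at 1. rewrite ln_div, ln_Rpower by (auto; apply exp_pos).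
  replace (p * (ln x - / p * ln P)) with (p * ln x + - ln P) by (field; auto).
  rewrite exp_plus, exp_Ropp, exp_ln; auto.
Qed.

(* Young's inequality applied pointwise to u/||u||_p and v/||v||_q. *)
Lemma RInt_mult_le_holder (u v : R -> R) (c d p q : R) :
  c < d -> 1 < p -> 1 < q -> / p + / q = 1 ->
  (forall t, c <= t <= d -> continuous u t /\ continuous v t /\ 0 < u t /\ 0 < v t) ->
  RInt (fun t => u t * v t) c d <=
  Rpower (RInt (fun t => Rpower (u t) p) c d) (/ p) *
  Rpower (RInt (fun t => Rpower (v t) q) c d) (/ q).
Proof.
  intros Hcd Hp Hq Hpq H.
  assert (Cup : forall t, c <= t <= d -> continuous (fun s => Rpower (u s) p) t)
    by (intros t Ht; destruct (H t Ht) as [? [? [? ?]]]; now apply continuous_Rpower_comp).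
  assert (Cvq : forall t, c <= t <= d -> continuous (fun s => Rpower (v s) q) t)
    by (intros t Ht; destruct (H t Ht) as [? [? [? ?]]]; now apply continuous_Rpower_comp).
  set (P := RInt (fun t => Rpower (u t) p) c d).
  set (Q := RInt (fun t => Rpower (v t) q) c d).
  assert (HP : 0 < P) by (apply RInt_gt_0; [lra | intros; apply exp_pos | intros; apply Cup; lra]).
  assert (HQ : 0 < Q) by (apply RInt_gt_0; [lra | intros; apply exp_pos | intros; apply Cvq; lra]).
  set (P' := Rpower P (/ p)). set (Q' := Rpower Q (/ q)).
  assert (HP' : 0 < P') by apply exp_pos.
  assert (HQ' : 0 < Q') by apply exp_pos.
  set (A := P' * Q' / (p * P)). set (B := P' * Q' / (q * Q)).
  assert (Hle : RInt (fun t => u t * v t) c d <=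
                RInt (fun t => A * Rpower (u t) p + B * Rpower (v t) q) c d).
  { apply RInt_le; [lra | | |].
    - apply ex_RInt_continuous_on; [lra |]. intros t Ht. destruct (H t Ht) as [? [? _]].
      now apply (continuous_mult u v).
    - apply ex_RInt_continuous_on; [lra |]. intros t Ht.
      apply (continuous_plus (fun s => A * Rpower (u s) p) (fun s => B * Rpower (v s) q)).
      + apply (continuous_scal_r A (fun s => Rpower (u s) p)); auto.
      + apply (continuous_scal_r B (fun s => Rpower (v s) q)); auto.
    - intros t Ht. destruct (H t ltac:(lra)) as [_ [_ [Hu Hv]]].
      pose proof (young (u t / P') (v t / Q') p q ltac:(apply Rdiv_lt_0_compat; auto)
                    ltac:(apply Rdiv_lt_0_compat; auto) Hp Hq Hpq) as Y.
      unfold P', Q' in Y. rewrite !Rpower_div_Rpower_inv in Y by lra. fold P' Q' in Y.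
      replace (u t * v t) with (P' * Q' * (u t / P' * (v t / Q'))) by (field; lra).
      replace (A * Rpower (u t) p + B * Rpower (v t) q)
        with (P' * Q' * (Rpower (u t) p / P / p + Rpower (v t) q / Q / q))
        by (unfold A, B; field; lra).
      apply Rmult_le_compat_l; [nra | auto]. }
  rewrite RInt_lincomb in Hle by (apply ex_RInt_continuous_on; [lra | auto]).
  fold P Q in Hle.
  assert (HAB : A * P + B * Q = P' * Q' * (/ p + / q)) by (unfold A, B; field; lra).
  rewrite Hpq in HAB. lra.
Qed.

Lemma is_derive_RInt_tail (l : R -> R) (m t : R) : (forall s, continuous l s) ->
  is_derive (fun s => RInt l s m) t (- l t).
Proof.
  intros Hl. apply (is_derive_RInt' l _ t m); [| apply Hl].
  apply filter_forall. intros y. apply (RInt_correct l y m).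
  apply (ex_RInt_continuous (V := R_CompleteNormedModule)). auto.
Qed.

Lemma is_derive_RInt_head (l : R -> R) (c t : R) : (forall s, continuous l s) ->
  is_derive (fun s => RInt l c s) t (l t).
Proof.
  intros Hl. apply (is_derive_RInt l _ c t); [| apply Hl].
  apply filter_forall. intros y. apply (RInt_correct l c y).
  apply (ex_RInt_continuous (V := R_CompleteNormedModule)). auto.
Qed.

(* Comparing f with f + L and f - L, L an antiderivative of the majorant l of |f'|. *)
Lemma abs_sub_le_RInt_majorant (f f' l : R -> R) (t m : R) : t <= m ->
  (forall s, t <= s <= m -> derivable_pt_lim f s (f' s)) ->
  (forall s, continuous l s) ->
  (forall s, t <= s <= m -> Rabs (f' s) <= l s) ->
  Rabs (f m - f t) <= RInt l t m.
Proof.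
  intros Htm Hf Hl Hb.
  set (L := fun s => RInt l t s).
  assert (DL : forall s, is_derive L s (l s)) by (intros; now apply is_derive_RInt_head).
  assert (CL : forall s, continuity_pt L s).
  { intros s. apply continuity_pt_filterlim, (ex_derive_continuous L).
    exists (l s). apply DL. }
  assert (Cf : forall s, t <= s <= m -> continuity_pt f s)
    by (intros s Hs; apply derivable_continuous_pt; exists (f' s); apply Hf, Hs).
  assert (Lt : L t = 0) by (unfold L; rewrite RInt_point; reflexivity).
  destruct (MVT_gen (fun s => f s - L s) t m (fun s => f' s - l s)) as [c1 [Hc1 E1]].
  { intros s Hs; rewrite Rmin_left, Rmax_right in Hs by lra.
    apply is_derive_Reals, derivable_pt_lim_minus; [apply Hf; lra | apply is_derive_Reals, DL]. }
  { intros s Hs; rewrite Rmin_left, Rmax_right in Hs by lra.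
    apply continuity_pt_minus; [apply Cf; lra | apply CL]. }
  destruct (MVT_gen (fun s => f s + L s) t m (fun s => f' s + l s)) as [c2 [Hc2 E2]].
  { intros s Hs; rewrite Rmin_left, Rmax_right in Hs by lra.
    apply is_derive_Reals, derivable_pt_lim_plus; [apply Hf; lra | apply is_derive_Reals, DL]. }
  { intros s Hs; rewrite Rmin_left, Rmax_right in Hs by lra.
    apply continuity_pt_plus; [apply Cf; lra | apply CL]. }
  rewrite Rmin_left, Rmax_right in Hc1, Hc2 by lra.
  pose proof (Hb c1 Hc1). pose proof (Hb c2 Hc2).
  pose proof (Rle_abs (f' c1)). pose proof (Rle_abs (- f' c2)). rewrite Rabs_Ropp in *.
  assert ((f' c1 - l c1) * (m - t) <= 0) by (apply Rmult_le_0_r; lra).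
  assert ((f' c2 + l c2) * (m - t) >= 0) by (apply Rle_ge, Rmult_le_pos; lra).
  fold L. apply Rabs_le. lra.
Qed.

(* The limit predicates whose witnesses [improper_left] and [improper_right] choose. *)
Definition right_lim (u : R -> R) (c l : R) : Prop :=
  forall eps, eps > 0 -> exists delta, delta > 0 /\
    forall x, c < x < c + delta -> Rabs (u x - l) < eps.

Definition left_lim (u : R -> R) (d l : R) : Prop :=
  forall eps, eps > 0 -> exists delta, delta > 0 /\
    forall x, d - delta < x < d -> Rabs (u x - l) < eps.

Lemma left_lim_unique (u : R -> R) (d l l' : R) : left_lim u d l -> left_lim u d l' -> l = l'.
Proof.
  intros H H'. apply Rminus_diag_uniq, Rabs_eq_0, Rle_antisym; [| apply Rabs_pos].
  apply Rle_plus_epsilon. intros eps He.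
  destruct (H (eps / 2)) as [d1 [Hd1 H1]]; [lra |].
  destruct (H' (eps / 2)) as [d2 [Hd2 H2]]; [lra |].
  set (x := d - Rmin d1 d2 / 2).
  pose proof (Rmin_l d1 d2). pose proof (Rmin_r d1 d2). pose proof (Rmin_pos d1 d2 Hd1 Hd2).
  specialize (H1 x ltac:(unfold x; lra)). specialize (H2 x ltac:(unfold x; lra)).
  rewrite Rabs_minus_sym in H1.
  pose proof (Rabs_triang (l - u x) (u x - l')).
  replace (l - u x + (u x - l')) with (l - l') in * by ring. lra.
Qed.

Lemma inv_INR_S_small (d : R) : 0 < d ->
  exists N, forall n, (n >= N)%nat -> 0 < / INR (S n) < d.
Proof.
  intros Hd. destruct (archimed (/ d)) as [H1 _]. pose proof (Rinv_0_lt_compat d Hd).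
  exists (Z.to_nat (up (/ d))). intros n Hn.
  apply le_INR in Hn. rewrite INR_IZR_INZ, Z2Nat.id in Hn by (apply le_IZR; lra).
  rewrite S_INR. pose proof (pos_INR n).
  split; [apply Rinv_0_lt_compat; lra |].
  rewrite <- (Rinv_inv d). apply Rinv_lt_contravar; nra.
Qed.

Lemma right_lim_of_cauchy (u : R -> R) (c : R) :
  (forall eps, 0 < eps -> exists d, 0 < d /\
     forall x y, c < x < c + d -> c < y < c + d -> Rabs (u x - u y) < eps) ->
  exists l, right_lim u c l.
Proof.
  intros HC.
  set (s := fun n : nat => u (c + / INR (S n))).
  assert (Hc : Cauchy_crit s).
  { intros eps He. destruct (HC eps He) as [d [Hd Hd']].
    destruct (inv_INR_S_small d Hd) as [N HN]. exists N. intros n k Hn Hk.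
    specialize (HN n Hn) as Hn'. specialize (HN k Hk) as Hk'. apply Hd'; lra. }
  destruct (Rcomplete.R_complete s Hc) as [l Hl]. exists l.
  intros eps He. destruct (HC (eps / 2)) as [d [Hd Hd']]; [lra |].
  exists d. split; auto. intros x Hx.
  destruct (Hl (eps / 2)) as [N1 HN1]; [lra |].
  destruct (inv_INR_S_small d Hd) as [N2 HN2].
  set (N := max N1 N2).
  specialize (HN1 N (Nat.le_max_l _ _)). specialize (HN2 N (Nat.le_max_r _ _)).
  unfold R_dist in HN1. specialize (Hd' x (c + / INR (S N)) Hx ltac:(lra)).
  pose proof (Rabs_triang (u x - s N) (s N - l)).
  replace (u x - s N + (s N - l)) with (u x - l) in * by ring.
  unfold s in *. lra.
Qed.

Lemma right_lim_lincomb (u v : R -> R) (c k U V : R) :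
  right_lim u c U -> right_lim v c V -> right_lim (fun x => k * u x - v x) c (k * U - V).
Proof.
  intros Hu Hv eps He.
  destruct (Hu (eps / (2 * (Rabs k + 1)))) as [d1 [Hd1 H1]].
  { apply Rdiv_lt_0_compat; [| pose proof (Rabs_pos k)]; lra. }
  destruct (Hv (eps / 2)) as [d2 [Hd2 H2]]; [lra |].
  exists (Rmin d1 d2). split; [now apply Rmin_pos |]. intros x Hx.
  pose proof (Rmin_l d1 d2). pose proof (Rmin_r d1 d2).
  specialize (H1 x ltac:(lra)). specialize (H2 x ltac:(lra)).
  replace (k * u x - v x - (k * U - V)) with (k * (u x - U) - (v x - V)) by ring.
  eapply Rle_lt_trans; [apply Rabs_triang |]. rewrite Rabs_Ropp, Rabs_mult.
  assert (Rabs k * Rabs (u x - U) <= (Rabs k + 1) * (eps / (2 * (Rabs k + 1)))).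
  { pose proof (Rabs_pos k). pose proof (Rabs_pos (u x - U)). nra. }
  replace ((Rabs k + 1) * (eps / (2 * (Rabs k + 1)))) with (eps / 2) in *
    by (field; pose proof (Rabs_pos k); lra).
  lra.
Qed.

Lemma right_lim_abs_le (u : R -> R) (c U K d : R) : right_lim u c U -> 0 < d ->
  (forall x, c < x < c + d -> Rabs (u x) <= K) -> Rabs U <= K.
Proof.
  intros Hu Hd HK. apply Rle_plus_epsilon. intros eps He.
  destruct (Hu eps He) as [d' [Hd' H]].
  set (x := c + Rmin d d' / 2).
  pose proof (Rmin_l d d'). pose proof (Rmin_r d d'). pose proof (Rmin_pos d d' Hd Hd').
  specialize (H x ltac:(unfold x; lra)). specialize (HK x ltac:(unfold x; lra)).
  pose proof (Rabs_triang_inv U (u x)). rewrite Rabs_minus_sym in H. lra.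
Qed.

Lemma improper_left_spec (F : R -> R) (c d : R) :
  (exists l, right_lim (fun x => Rint F x d) c l) ->
  right_lim (fun x => Rint F x d) c (improper_left F c d).
Proof. exact (epsilon_spec (inhabits 0) _). Qed.

Lemma improper_right_spec (F : R -> R) (c d : R) :
  (exists l, left_lim (fun x => Rint F c x) d l) ->
  left_lim (fun x => Rint F c x) d (improper_right F c d).
Proof. exact (epsilon_spec (inhabits 0) _). Qed.

(* The singularity of (t - a)^(al - 1) is integrable since its antiderivative vanishes at a. *)
Lemma right_lim_Rint_Rpower_shift_mult (h : R -> R) (a m al M : R) : a < m -> 0 < al ->
  (forall t, a < t <= m -> continuous h t /\ Rabs (h t) <= M) ->
  exists l, right_lim (fun x => Rint (fun t => Rpower (t - a) (al - 1) * h t) x m) a l.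
Proof.
  intros Ham Hal H.
  set (F := fun t => Rpower (t - a) (al - 1) * h t).
  assert (HM : 0 <= M) by (pose proof (Rabs_pos (h m)); destruct (H m); lra).
  assert (Hex : forall x y, a < x <= y -> y <= m -> ex_RInt F x y)
    by (intros; apply ex_RInt_Rpower_shift_mult; [lra | intros; apply H; lra]).
  assert (Hdiff : forall x y, a < x <= y -> y <= m -> Rint F x m - Rint F y m = RInt F x y).
  { intros x y Hx Hy. rewrite !Rint_RInt by (apply Hex; lra).
    rewrite <- (RInt_Chasles F x y m) by (apply Hex; lra). unfold plus; simpl. ring. }
  apply right_lim_of_cauchy. intros eps He.
  destruct (Rpower_small al (eps * al / (2 * (M + 1)))) as [d0 [Hd0 Hd0']]; auto.
  { apply Rdiv_lt_0_compat; nra. }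
  exists (Rmin d0 (m - a)). split; [apply Rmin_pos; lra |].
  pose proof (Rmin_l d0 (m - a)). pose proof (Rmin_r d0 (m - a)).
  assert (Hw : forall x y, a < x <= y -> y < a + Rmin d0 (m - a) ->
                 Rabs (Rint F x m - Rint F y m) < eps).
  { intros x y Hx Hy. rewrite Hdiff by lra.
    eapply Rle_lt_trans; [apply abs_RInt_Rpower_shift_mult_le; auto; intros; apply H; lra |].
    specialize (Hd0' (y - a) ltac:(lra)).
    apply Rle_lt_trans with (M * (eps * al / (2 * (M + 1)) / al)).
    - apply Rmult_le_compat_l; auto. unfold Rdiv.
      apply Rmult_le_compat_r; [apply Rlt_le, Rinv_0_lt_compat |]; lra.
    - replace (M * (eps * al / (2 * (M + 1)) / al)) with (eps * (M / (2 * (M + 1))))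
        by (field; lra).
      assert (M / (2 * (M + 1)) < 1).
      { apply Rmult_lt_reg_r with (2 * (M + 1)); [lra |].
        unfold Rdiv. rewrite Rmult_assoc, Rinv_l; lra. }
      nra. }
  intros x y Hx Hy. destruct (Rle_or_lt x y).
  - apply Hw; lra.
  - rewrite Rabs_minus_sym. apply Hw; lra.
Qed.

Lemma Rint_reflect_Rpower_weight (h : R -> R) (a b al y : R) : a < b -> (a + b) / 2 < y < b ->
  (forall t, (a + b) / 2 <= t <= y -> continuous h t) ->
  Rint (fun t => Rpower (b - t) (al - 1) * h t) ((a + b) / 2) y =
  Rint (fun s => Rpower (s - a) (al - 1) * h (a + b - s)) (a + b - y) ((a + b) / 2).
Proof.
  intros Hab Hy Hh.
  assert (Ex : ex_RInt (fun t => Rpower (b - t) (al - 1) * h t) ((a + b) / 2) y).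
  { apply ex_RInt_continuous_on; [lra |]. intros t Ht.
    apply (continuous_mult (fun t => Rpower (b - t) (al - 1)) h); [| apply Hh; lra].
    apply (continuous_Rpower_comp (fun t => b - t)); [apply continuous_const_minus | lra]. }
  rewrite (Rint_RInt _ _ _ Ex), (RInt_reflect _ (a + b) _ _ Ex), Rint_RInt.
  2:{ apply ex_RInt_Rpower_shift_mult; [lra |]. intros t Ht.
      apply (continuous_comp (fun s => a + b - s) h);
        [apply continuous_const_minus | apply Hh; lra]. }
  replace (a + b - (a + b) / 2) with ((a + b) / 2) by field.
  apply RInt_ext. intros s _. now replace (b - (a + b - s)) with (s - a) by ring.
Qed.

Lemma improper_right_reflect (h : R -> R) (a b al M : R) : a < b -> 0 < al ->
  (forall t, (a + b) / 2 <= t < b -> continuous h t /\ Rabs (h t) <= M) ->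
  improper_right (fun t => Rpower (b - t) (al - 1) * h t) ((a + b) / 2) b =
  improper_left (fun s => Rpower (s - a) (al - 1) * h (a + b - s)) a ((a + b) / 2).
Proof.
  intros Hab Hal H.
  set (L := improper_left (fun s => Rpower (s - a) (al - 1) * h (a + b - s)) a ((a + b) / 2)).
  assert (HL : right_lim (fun x => Rint (fun s => Rpower (s - a) (al - 1) * h (a + b - s))
                                        x ((a + b) / 2)) a L).
  { apply improper_left_spec, (right_lim_Rint_Rpower_shift_mult _ a _ al M); [lra | auto |].
    intros t Ht. split; [| apply H; lra].
    apply (continuous_comp (fun s => a + b - s) h); [apply continuous_const_minus | apply H; lra]. }
  assert (HR : left_lim (fun y => Rint (fun t => Rpower (b - t) (al - 1) * h t)
                                       ((a + b) / 2) y) b L).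
  { intros eps He. destruct (HL eps He) as [d [Hd Hd']].
    exists (Rmin d ((b - a) / 2)). split; [apply Rmin_pos; lra |].
    intros y Hy. pose proof (Rmin_l d ((b - a) / 2)). pose proof (Rmin_r d ((b - a) / 2)).
    rewrite Rint_reflect_Rpower_weight by (lra || (intros; apply H; lra)).
    apply Hd'. lra. }
  eapply left_lim_unique; [apply improper_right_spec; now exists L | exact HR].
Qed.

Definition gamma_trunc (s : R) (n : nat) : R :=
  RInt (fun t => Rpower t (s - 1) * exp (- t)) (/ INR (S n)) (INR (S n)).

Lemma INR_S_ge1 (n : nat) : 1 <= INR (S n).
Proof. rewrite S_INR. pose proof (pos_INR n). lra. Qed.

Lemma inv_INR_S_bounds (n : nat) : 0 < / INR (S n) <= 1.
Proof.
  pose proof (INR_S_ge1 n). split; [apply Rinv_0_lt_compat; lra |].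
  rewrite <- Rinv_1. apply Rinv_le_contravar; lra.
Qed.

Lemma continuous_gamma_integrand (s t : R) : 0 < t ->
  continuous (fun t => Rpower t (s - 1) * exp (- t)) t.
Proof.
  intros Ht. apply (continuous_mult (fun t => Rpower t (s - 1)) (fun t => exp (- t))).
  - now apply Rpower_continuous.
  - apply continuity_pt_filterlim, derivable_continuous_pt.
    apply (derivable_pt_comp (fun t => - t) exp);
      [apply derivable_pt_opp, derivable_pt_id | apply derivable_pt_exp].
Qed.

Lemma ex_RInt_gamma_integrand (s c d : R) : 0 < c <= d ->
  ex_RInt (fun t => Rpower t (s - 1) * exp (- t)) c d.
Proof.
  intros H. apply ex_RInt_continuous_on; [lra |].
  intros t Ht. apply continuous_gamma_integrand. lra.
Qed.

Lemma gamma_trunc_growing (s : R) : Un_growing (gamma_trunc s).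
Proof.
  intros n. unfold gamma_trunc.
  pose proof (inv_INR_S_bounds n). pose proof (inv_INR_S_bounds (S n)). pose proof (INR_S_ge1 n).
  assert (Hc : / INR (S (S n)) <= / INR (S n))
    by (apply Rinv_le_contravar; [lra | rewrite (S_INR (S n)); lra]).
  assert (HN : INR (S n) <= INR (S (S n))) by (rewrite (S_INR (S n)); lra).
  set (F := fun t => Rpower t (s - 1) * exp (- t)).
  assert (HF : forall c d, 0 < c <= d -> 0 <= RInt F c d).
  { intros c d Hcd. apply RInt_ge_0; [lra | now apply ex_RInt_gamma_integrand |].
    intros. apply Rlt_le, Rmult_lt_0_compat; apply exp_pos. }
  rewrite <- (RInt_Chasles F (/ INR (S (S n))) (/ INR (S n)) (INR (S (S n))))
    by (apply ex_RInt_gamma_integrand; lra).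
  rewrite <- (RInt_Chasles F (/ INR (S n)) (INR (S n)) (INR (S (S n))))
    by (apply ex_RInt_gamma_integrand; lra).
  pose proof (HF (/ INR (S (S n))) (/ INR (S n)) ltac:(lra)).
  pose proof (HF (INR (S n)) (INR (S (S n))) ltac:(lra)).
  repeat change (plus ?x ?y) with (Rplus x y). lra.
Qed.

Lemma ln_le_2sqrt (t : R) : 1 <= t -> 0 <= ln t <= 2 * sqrt t.
Proof.
  intros Ht. split; [rewrite <- ln_1; apply ln_le; lra |].
  assert (Hs : 0 < sqrt t) by (apply sqrt_lt_R0; lra).
  replace t with (sqrt t * sqrt t) at 1 by (apply sqrt_sqrt; lra).
  rewrite ln_mult by auto.
  pose proof (exp_ineq1_le (ln (sqrt t))) as H. rewrite exp_ln in H; auto. lra.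
Qed.

(* With ln t <= 2 sqrt t, this is AM-GM for 2|r| and sqrt t. *)
Lemma mult_ln_le (r t : R) : 1 <= t -> r * ln t <= 2 * r ^ 2 + t / 2.
Proof.
  intros Ht. destruct (ln_le_2sqrt t Ht) as [H0 H1].
  assert (Hs : 0 <= sqrt t) by apply sqrt_pos.
  assert (Hst : sqrt t * sqrt t = t) by (apply sqrt_sqrt; lra).
  assert (r * ln t <= Rabs r * (2 * sqrt t)).
  { eapply Rle_trans; [apply Rmult_le_compat_r; [auto | apply Rle_abs] |].
    apply Rmult_le_compat_l; [apply Rabs_pos | auto]. }
  assert (Rabs r ^ 2 = r ^ 2) by (rewrite RPow_abs; apply Rabs_right; nra).
  pose proof (Rabs_pos r). pose proof (pow2_ge_0 (2 * Rabs r - sqrt t)). nra.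
Qed.

Lemma RInt_gamma_integrand_head_le (s c : R) : 0 < s -> 0 < c <= 1 ->
  RInt (fun t => Rpower t (s - 1) * exp (- t)) c 1 <= / s.
Proof.
  intros Hs Hc.
  apply Rle_trans with (RInt (fun t => Rpower (t - 0) (s - 1)) c 1).
  - apply RInt_le; [lra | apply ex_RInt_gamma_integrand; lra | |].
    + apply ex_RInt_continuous_on; [lra |]. intros. apply continuous_Rpower_shift. lra.
    + intros t Ht. rewrite Rminus_0_r.
      pose proof (exp_pos (- t)). pose proof (exp_pos ((s - 1) * ln t)).
      assert (exp (- t) <= 1) by (rewrite <- exp_0; apply exp_le_compat; lra).
      unfold Rpower. nra.
  - rewrite RInt_Rpower_shift by lra. rewrite !Rminus_0_r.
    unfold Rpower. rewrite ln_1, Rmult_0_r, exp_0.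
    pose proof (exp_pos (s * ln c)). pose proof (Rinv_0_lt_compat s Hs).
    unfold Rdiv. nra.
Qed.

(* t^(s-1) e^(-t) <= e^(2(s-1)^2) e^(-t/2) for t >= 1. *)
Lemma RInt_gamma_integrand_tail_le (s N : R) : 1 <= N ->
  RInt (fun t => Rpower t (s - 1) * exp (- t)) 1 N <= 2 * exp (2 * (s - 1) ^ 2).
Proof.
  intros HN. set (K := exp (2 * (s - 1) ^ 2)).
  assert (Cexp : forall t, continuous (fun t => exp (- t / 2)) t).
  { intros t. apply continuity_pt_filterlim, derivable_continuous_pt.
    apply (derivable_pt_comp (fun t => - t / 2) exp); [| apply derivable_pt_exp].
    apply derivable_pt_div;
      [apply derivable_pt_opp, derivable_pt_id | apply derivable_pt_const | lra]. }
  apply Rle_trans with (RInt (fun t => K * exp (- t / 2)) 1 N).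
  - apply RInt_le; [lra | apply ex_RInt_gamma_integrand; lra | |].
    + apply ex_RInt_continuous_on; [lra |]. intros t Ht.
      apply (continuous_scal_r K (fun t => exp (- t / 2))). auto.
    + intros t Ht. unfold K, Rpower. rewrite <- !exp_plus. apply exp_le_compat.
      pose proof (mult_ln_le (s - 1) t ltac:(lra)). lra.
  - rewrite RInt_scal_l by (apply ex_RInt_continuous_on; auto; lra).
    assert (E : RInt (fun t => exp (- t / 2)) 1 N = 2 * exp (- 1 / 2) - 2 * exp (- N / 2)).
    { apply is_RInt_unique.
      replace (2 * exp (- 1 / 2) - 2 * exp (- N / 2))
        with (minus (- 2 * exp (- N / 2)) (- 2 * exp (- 1 / 2)))
        by (unfold minus, plus, opp; simpl; ring).
      apply (is_RInt_derive (V := R_CompleteNormedModule) (fun t => - 2 * exp (- t / 2)));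
        intros x _; auto.
      auto_derive; [auto |].
      assert (Hr : forall u : R, -2 * (- (1) * / 2 * u) = u) by (intros; field).
      unfold Rdiv. apply Hr. }
    rewrite E. pose proof (exp_pos (- N / 2)). assert (HK : 0 < K) by apply exp_pos.
    assert (exp (- 1 / 2) <= 1) by (rewrite <- exp_0; apply exp_le_compat; lra).
    nra.
Qed.

Lemma gamma_trunc_bounded (s : R) : 0 < s -> has_ub (gamma_trunc s).
Proof.
  intros Hs. exists (/ s + 2 * exp (2 * (s - 1) ^ 2)). intros y [n ->]. unfold gamma_trunc.
  pose proof (inv_INR_S_bounds n). pose proof (INR_S_ge1 n).
  rewrite <- (RInt_Chasles _ (/ INR (S n)) 1 (INR (S n))) by (apply ex_RInt_gamma_integrand; lra).
  pose proof (RInt_gamma_integrand_head_le s (/ INR (S n)) Hs ltac:(lra)).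
  pose proof (RInt_gamma_integrand_tail_le s (INR (S n)) ltac:(lra)).
  change (plus ?x ?y) with (Rplus x y). lra.
Qed.

(* Integration by parts against -t^s e^(-t). *)
Lemma gamma_trunc_succ (s : R) (n : nat) : 0 < s ->
  gamma_trunc (s + 1) n = s * gamma_trunc s n + Rpower (/ INR (S n)) s * exp (- / INR (S n))
                          - Rpower (INR (S n)) s * exp (- INR (S n)).
Proof.
  intros Hs. unfold gamma_trunc.
  pose proof (inv_INR_S_bounds n). pose proof (INR_S_ge1 n).
  set (c := / INR (S n)) in *. set (N := INR (S n)) in *.
  set (P := fun t => - (Rpower t s * exp (- t))).
  set (dP := fun t => 1 * (Rpower t (s + 1 - 1) * exp (- t))
                      + (- s) * (Rpower t (s - 1) * exp (- t))).
  assert (D : forall t, 0 < t -> is_derive P t (dP t)).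
  { intros t Ht. apply is_derive_Reals. unfold P, dP.
    replace (s + 1 - 1) with s by ring.
    replace (1 * (Rpower t s * exp (- t)) + - s * (Rpower t (s - 1) * exp (- t)))
      with (- (s * Rpower t (s - 1) * exp (- t) + Rpower t s * (exp (- t) * (- 1)))) by ring.
    apply derivable_pt_lim_opp.
    apply (derivable_pt_lim_mult (fun t => Rpower t s) (fun t => exp (- t))).
    - now apply derivable_pt_lim_power.
    - apply (derivable_pt_lim_comp (fun t => - t) exp);
        [apply derivable_pt_lim_opp, derivable_pt_lim_id | apply derivable_pt_lim_exp]. }
  assert (I : is_RInt dP c N (minus (P N) (P c))).
  { apply (is_RInt_derive (V := R_CompleteNormedModule) P dP);
      intros t Ht; rewrite Rmin_left in Ht by lra; [apply D; lra |].
    apply (continuous_plus (fun t => 1 * (Rpower t (s + 1 - 1) * exp (- t)))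
                           (fun t => - s * (Rpower t (s - 1) * exp (- t))));
      [apply (continuous_scal_r 1 (fun t => Rpower t (s + 1 - 1) * exp (- t)))
      | apply (continuous_scal_r (- s) (fun t => Rpower t (s - 1) * exp (- t)))];
      apply continuous_gamma_integrand; lra. }
  apply (is_RInt_unique (V := R_CompleteNormedModule)) in I. unfold dP in I.
  rewrite RInt_lincomb in I by (apply ex_RInt_gamma_integrand; lra).
  unfold minus, plus, opp in I; simpl in I. unfold P in I. lra.
Qed.

Lemma cv_Rpower_inv_INR_S_exp (s : R) : 0 < s ->
  Un_cv (fun n => Rpower (/ INR (S n)) s * exp (- / INR (S n))) 0.
Proof.
  intros Hs e He. destruct (Rpower_small s e Hs He) as [d [Hd Hd']].
  destruct (inv_INR_S_small d Hd) as [N HN]. exists N. intros n Hn.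
  specialize (HN n Hn). unfold R_dist. rewrite Rminus_0_r.
  pose proof (exp_pos (- / INR (S n))). pose proof (exp_pos (s * ln (/ INR (S n)))).
  assert (exp (- / INR (S n)) <= 1) by (rewrite <- exp_0; apply exp_le_compat; lra).
  specialize (Hd' _ HN). unfold Rpower in *.
  rewrite Rabs_right by (apply Rle_ge, Rlt_le, Rmult_lt_0_compat; auto). nra.
Qed.

Lemma cv_Rpower_INR_S_exp (s : R) : 0 < s ->
  Un_cv (fun n => Rpower (INR (S n)) s * exp (- INR (S n))) 0.
Proof.
  intros Hs e He. set (K := exp (2 * s ^ 2)). assert (HK : 0 < K) by apply exp_pos.
  destruct (inv_INR_S_small (e / (2 * K))) as [N HN]; [apply Rdiv_lt_0_compat; lra |].
  exists N. intros n Hn. specialize (HN n Hn). unfold R_dist. rewrite Rminus_0_r.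
  pose proof (INR_S_ge1 n). set (M := INR (S n)) in *.
  unfold Rpower. rewrite <- exp_plus, Rabs_right by (apply Rle_ge, Rlt_le, exp_pos).
  apply Rle_lt_trans with (exp (2 * s ^ 2 + - (M / 2)));
    [apply exp_le_compat; pose proof (mult_ln_le s M ltac:(lra)); lra |].
  rewrite exp_plus, exp_Ropp. fold K.
  pose proof (exp_ineq1_le (M / 2)). pose proof (exp_pos (M / 2)).
  apply Rmult_lt_reg_r with (exp (M / 2)); [auto |].
  rewrite Rmult_assoc, Rinv_l, Rmult_1_r by lra.
  destruct HN as [_ HN].
  assert (H2K : 2 * K * / M < e).
  { replace e with (2 * K * (e / (2 * K))) by (field; lra).
    apply Rmult_lt_compat_l; lra. }
  assert (HiM : M * / M = 1) by (field; lra).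
  nra.
Qed.

Lemma Gamma_spec (s : R) : 0 < s -> Un_cv (gamma_trunc s) (Gamma s).
Proof.
  intros Hs. unfold Gamma.
  replace (fun n => Rint (fun t => Rpower t (s - 1) * exp (- t)) (/ INR (S n)) (INR (S n)))
    with (gamma_trunc s).
  - apply epsilon_spec.
    destruct (growing_cv _ (gamma_trunc_growing s) (gamma_trunc_bounded s Hs)) as [l Hl].
    now exists l.
  - apply functional_extensionality. intros n. symmetry. apply Rint_RInt.
    apply ex_RInt_gamma_integrand. pose proof (inv_INR_S_bounds n). pose proof (INR_S_ge1 n). lra.
Qed.

Lemma Gamma_pos (s : R) : 0 < s -> 0 < Gamma s.
Proof.
  intros Hs. apply Rlt_le_trans with (gamma_trunc s 1);
    [| exact (growing_ineq _ _ (gamma_trunc_growing s) (Gamma_spec s Hs) 1)].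
  unfold gamma_trunc. replace (INR (S 1)) with 2 by (simpl; ring).
  apply RInt_gt_0; [lra | |].
  - intros. apply Rmult_lt_0_compat; apply exp_pos.
  - intros x Hx. apply continuous_gamma_integrand. lra.
Qed.

Lemma Gamma_succ (s : R) : 0 < s -> Gamma (s + 1) = s * Gamma s.
Proof.
  intros Hs.
  assert (Hcv : Un_cv (gamma_trunc (s + 1)) (s * Gamma s + 0 - 0)).
  { replace (gamma_trunc (s + 1)) with
      (fun n => s * gamma_trunc s n + Rpower (/ INR (S n)) s * exp (- / INR (S n))
                - Rpower (INR (S n)) s * exp (- INR (S n)))
      by (apply functional_extensionality; intros n; symmetry; now apply gamma_trunc_succ).
    apply CV_minus; [apply CV_plus |].
    - apply (CV_mult (fun _ => s)); [intros e He; exists 0%nat; intros; unfold R_dist;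
        rewrite Rminus_diag, Rabs_R0; auto | now apply Gamma_spec].
    - now apply cv_Rpower_inv_INR_S_exp.
    - now apply cv_Rpower_INR_S_exp. }
  rewrite (UL_sequence _ _ _ (Gamma_spec (s + 1) ltac:(lra)) Hcv). ring.
Qed.

(* Integration by parts: (t - a)^al / al is an antiderivative of the weight, and the
   boundary term at x is nonpositive. *)
Lemma RInt_weight_tail_le (l : R -> R) (a m al x : R) : a < x <= m -> 0 < al ->
  (forall t, continuous l t) -> (forall t, x <= t <= m -> 0 <= l t) ->
  RInt (fun t => Rpower (t - a) (al - 1) * RInt l t m) x m <=
  RInt (fun t => Rpower (t - a) al / al * l t) x m.
Proof.
  intros Hx Hal Hl Hl0.
  set (w := fun t => Rpower (t - a) (al - 1)).
  set (W := fun t => Rpower (t - a) al / al).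
  set (La := fun t => RInt l t m).
  assert (Cw : forall s, a < s -> continuous w s) by (intros; now apply continuous_Rpower_shift).
  assert (DW : forall s, a < s -> is_derive W s (w s))
    by (intros; apply is_derive_Rpower_shift; lra).
  assert (CW : forall s, a < s -> continuous W s)
    by (intros s Hs; apply (ex_derive_continuous W); exists (w s); auto).
  assert (DLa : forall s, is_derive La s (opp (l s))) by (intros; now apply is_derive_RInt_tail).
  assert (CLa : forall s, continuous La s)
    by (intros s; apply (ex_derive_continuous La); eexists; apply DLa).
  assert (Lam : La m = 0) by (unfold La; rewrite RInt_point; reflexivity).
  assert (Lax : 0 <= La x)
    by (apply RInt_ge_0; [lra | apply ex_RInt_continuous_on; auto; lra | intros; apply Hl0; lra]).
  assert (Hparts : is_RInt (fun t => w t * La t - W t * l t) x m (- (W x * La x))).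
  { pose proof (is_RInt_scal_derive W La w (fun t => opp (l t)) x m) as H.
    rewrite Rmin_left, Rmax_right in H by lra.
    specialize (H (fun t Ht => DW t ltac:(lra)) (fun t _ => DLa t)
                  (fun t Ht => Cw t ltac:(lra)) (fun t _ => continuous_opp l t (Hl t))).
    replace (minus (scal (W m) (La m)) (scal (W x) (La x))) with (- (W x * La x)) in H
      by (rewrite Lam; unfold minus, plus, opp, scal; simpl; unfold mult; simpl; ring).
    eapply is_RInt_ext; [| exact H].
    intros t _. unfold plus, scal, opp; simpl. unfold mult; simpl. ring. }
  assert (HWl : ex_RInt (fun t => W t * l t) x m).
  { apply ex_RInt_continuous_on; [lra |]. intros t Ht.
    apply (continuous_mult W l); [apply CW; lra | auto]. }
  rewrite (RInt_ext _ (fun t => 1 * (w t * La t - W t * l t) + 1 * (W t * l t)))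
    by (intros; unfold w, W, La; R_eq; ring).
  rewrite RInt_lincomb by (auto; now exists (- (W x * La x))).
  rewrite (is_RInt_unique _ _ _ _ Hparts).
  assert (0 <= W x * La x)
    by (apply Rmult_le_pos; [apply Rlt_le, Rdiv_lt_0_compat; [apply exp_pos |] |]; lra).
  change (RInt (fun t => Rpower (t - a) al / al * l t) x m)
    with (RInt (fun t => W t * l t) x m).
  lra.
Qed.

(* The L^p norm of (t - a)^al / al on [a, a + h]. *)
Definition weight_norm (al p h : R) : R :=
  Rpower (Rpower h (al * p + 1) / ((al * p + 1) * Rpower al p)) (/ p).

Lemma RInt_Rpower_weight_pow_le (a m al p x : R) : a < x <= m -> 0 < al -> 0 < p ->
  RInt (fun t => Rpower (Rpower (t - a) al / al) p) x m <=
  Rpower (m - a) (al * p + 1) / ((al * p + 1) * Rpower al p).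
Proof.
  intros Hx Hal Hp.
  assert (Hap : 0 < al * p + 1) by nra.
  rewrite (RInt_ext _ (fun t => / Rpower al p * Rpower (t - a) (al * p + 1 - 1))).
  2:{ intros t Ht. rewrite Rmin_left in Ht by lra. unfold Rpower.
      rewrite ln_div, ln_exp by (try apply exp_pos; lra).
      rewrite <- exp_Ropp, <- exp_plus. f_equal. ring. }
  rewrite RInt_scal_l, RInt_Rpower_shift by
    (lra || (apply ex_RInt_continuous_on; [lra | intros; apply continuous_Rpower_shift; lra])).
  assert (0 <= / Rpower al p * Rpower (x - a) (al * p + 1) * / (al * p + 1)).
  { repeat apply Rmult_le_pos; try (apply Rlt_le, Rinv_0_lt_compat); try apply Rlt_le;
      auto; apply exp_pos. }
  unfold Rdiv. rewrite Rinv_mult. lra.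
Qed.

Lemma RInt_weight_mult_le (l : R -> R) (a m al q x : R) : a < x <= m -> 0 < al -> 1 < q ->
  (forall t, continuous l t) -> (forall t, 0 < l t) ->
  RInt (fun t => Rpower (t - a) al / al * l t) x m <=
  weight_norm al (q / (q - 1)) (m - a) * Rpower (RInt (fun t => Rpower (l t) q) a m) (/ q).
Proof.
  intros Hx Hal Hq Hl Hl0. set (p := q / (q - 1)).
  destruct (conjugate_exponent q Hq) as [Hp Hpq]. fold p in Hp, Hpq.
  assert (HW : forall t, a < t -> 0 < Rpower (t - a) al / al)
    by (intros; apply Rdiv_lt_0_compat; [apply exp_pos | lra]).
  destruct (Req_dec x m) as [<- | Hxm].
  { rewrite RInt_point. apply Rmult_le_pos; apply Rlt_le, exp_pos. }
  assert (Clq : forall t, continuous (fun s => Rpower (l s) q) t)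
    by (intros; now apply continuous_Rpower_comp).
  eapply Rle_trans.
  { apply (RInt_mult_le_holder (fun t => Rpower (t - a) al / al) l x m p q); [lra | auto.. |].
    intros t Ht. repeat split; auto; [| apply HW; lra].
    apply (ex_derive_continuous (fun t => Rpower (t - a) al / al)).
    exists (Rpower (t - a) (al - 1)). apply is_derive_Rpower_shift; lra. }
  apply Rmult_le_compat; try (apply Rlt_le, exp_pos).
  - apply Rle_Rpower_l; [apply Rlt_le, Rinv_0_lt_compat; lra | split].
    + apply RInt_gt_0; [lra | intros; apply exp_pos |]. intros t Ht.
      apply continuous_Rpower_comp; [| apply HW; lra].
      apply (ex_derive_continuous (fun t => Rpower (t - a) al / al)).
      exists (Rpower (t - a) (al - 1)). apply is_derive_Rpower_shift; lra.
    + apply RInt_Rpower_weight_pow_le; lra.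
  - apply Rle_Rpower_l; [apply Rlt_le, Rinv_0_lt_compat; lra | split].
    + apply RInt_gt_0; [lra | intros; apply exp_pos | auto].
    + rewrite <- (RInt_Chasles (fun t => Rpower (l t) q) a x m)
        by (apply ex_RInt_continuous_on; auto; lra).
      assert (0 <= RInt (fun t => Rpower (l t) q) a x).
      { apply RInt_ge_0; [lra | apply ex_RInt_continuous_on; auto; lra |].
        intros; apply Rlt_le, exp_pos. }
      change (plus ?u ?v) with (Rplus u v). lra.
Qed.

Lemma abs_RInt_weight_diff_le_tail (f f' g l : R -> R) (a m al G x : R) : a < x <= m ->
  (forall t, a <= t <= m -> derivable_pt_lim f t (f' t)) ->
  (forall t, continuous l t) -> (forall t, a <= t <= m -> Rabs (f' t) <= l t) ->
  (forall t, a < t <= m -> continuous g t /\ Rabs (g t) <= G) ->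
  Rabs (RInt (fun t => Rpower (t - a) (al - 1) * g t * (f m - f t)) x m)
  <= G * RInt (fun t => Rpower (t - a) (al - 1) * RInt l t m) x m.
Proof.
  intros Hx Hf Hl Hfl Hg.
  assert (Cf : forall s, a <= s <= m -> continuous f s).
  { intros s Hs. apply (ex_derive_continuous f). exists (f' s). apply is_derive_Reals, Hf, Hs. }
  assert (CLa : forall t, continuous (fun s => RInt l s m) t)
    by (intros; apply (ex_derive_continuous (fun s => RInt l s m));
        eexists; now apply is_derive_RInt_tail).
  assert (Cw : forall t, x <= t -> continuous (fun s => Rpower (s - a) (al - 1)) t)
    by (intros; apply continuous_Rpower_shift; lra).
  rewrite <- RInt_scal_l.
  2:{ apply ex_RInt_continuous_on; [lra |]. intros t Ht.
      apply (continuous_mult (fun s => Rpower (s - a) (al - 1)) (fun s => RInt l s m));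
        [apply Cw; lra | auto]. }
  apply abs_RInt_le_continuous; [lra | |].
  - intros t Ht. split.
    + apply (continuous_mult (fun s => Rpower (s - a) (al - 1) * g s) (fun s => f m - f s)).
      * apply (continuous_mult (fun s => Rpower (s - a) (al - 1)) g);
          [apply Cw; lra | apply Hg; lra].
      * apply (continuous_minus (fun _ => f m) f); [apply continuous_const | apply Cf; lra].
    + apply (continuous_scal_r G (fun s => Rpower (s - a) (al - 1) * RInt l s m)).
      apply (continuous_mult (fun s => Rpower (s - a) (al - 1)) (fun s => RInt l s m));
        [apply Cw; lra | auto].
  - intros t Ht.
    assert (Hdf : Rabs (f m - f t) <= RInt l t m)
      by (apply (abs_sub_le_RInt_majorant f f');
          [lra | intros; apply Hf; lra | exact Hl | intros; apply Hfl; lra]).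
    destruct (Hg t ltac:(lra)) as [_ Hgt].
    rewrite !Rabs_mult, (Rabs_right (Rpower _ _)) by (apply Rle_ge, Rlt_le, exp_pos).
    pose proof (Rabs_pos (g t)). pose proof (Rabs_pos (f m - f t)).
    rewrite Rmult_assoc, (Rmult_comm G), Rmult_assoc.
    apply Rmult_le_compat_l; [apply Rlt_le, exp_pos |].
    rewrite Rmult_comm. apply Rmult_le_compat; lra.
Qed.

Lemma abs_RInt_weight_diff_le (f f' g l : R -> R) (a m al q G x : R) :
  a < x <= m -> 0 < al -> 1 < q ->
  (forall t, a <= t <= m -> derivable_pt_lim f t (f' t)) ->
  (forall t, continuous l t) -> (forall t, 0 < l t) ->
  (forall t, a <= t <= m -> Rabs (f' t) <= l t) ->
  (forall t, a < t <= m -> continuous g t /\ Rabs (g t) <= G) ->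
  Rabs (RInt (fun t => Rpower (t - a) (al - 1) * g t * (f m - f t)) x m)
  <= G * (weight_norm al (q / (q - 1)) (m - a) *
          Rpower (RInt (fun t => Rpower (l t) q) a m) (/ q)).
Proof.
  intros Hx Hal Hq Hf Hl Hl0 Hfl Hg.
  assert (HG : 0 <= G) by (pose proof (Rabs_pos (g m)); destruct (Hg m); lra).
  eapply Rle_trans; [apply (abs_RInt_weight_diff_le_tail f f'); auto |].
  apply Rmult_le_compat_l; [exact HG |].
  eapply Rle_trans; [| apply (RInt_weight_mult_le l a m al q x); auto].
  apply RInt_weight_tail_le; [lra | lra | exact Hl | intros; apply Rlt_le, Hl0].
Qed.

Lemma continuous_on_bounded (f : R -> R) (a b : R) : a <= b ->
  (forall t, a <= t <= b -> continuity_pt f t) ->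
  exists M, forall t, a <= t <= b -> Rabs (f t) <= M.
Proof.
  intros Hab Hf.
  destruct (continuity_ab_maj (comp Rabs f) a b Hab) as [Mx [HM _]].
  - intros c Hc. apply continuity_pt_comp; [auto | apply Rcontinuity_abs].
  - exists (comp Rabs f Mx). exact HM.
Qed.

Lemma Rint_weight_bracket (f g : R -> R) (a m al x : R) : a < x <= m ->
  (forall t, x <= t <= m -> continuous f t /\ continuous g t) ->
  f m * Rint (fun t => Rpower (t - a) (al - 1) * g t) x m
  - Rint (fun t => Rpower (t - a) (al - 1) * (f t * g t)) x m
  = RInt (fun t => Rpower (t - a) (al - 1) * g t * (f m - f t)) x m.
Proof.
  intros Hx H.
  assert (Ewg : ex_RInt (fun t => Rpower (t - a) (al - 1) * g t) x m)
    by (apply ex_RInt_Rpower_shift_mult; [lra |]; apply H).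
  assert (Ewfg : ex_RInt (fun t => Rpower (t - a) (al - 1) * (f t * g t)) x m)
    by (apply ex_RInt_Rpower_shift_mult; [lra |]; intros t Ht;
        destruct (H t Ht); now apply (continuous_mult f g)).
  rewrite !Rint_RInt by auto.
  replace (f m * RInt (fun t => Rpower (t - a) (al - 1) * g t) x m
           - RInt (fun t => Rpower (t - a) (al - 1) * (f t * g t)) x m)
    with (f m * RInt (fun t => Rpower (t - a) (al - 1) * g t) x m
          + (-1) * RInt (fun t => Rpower (t - a) (al - 1) * (f t * g t)) x m) by ring.
  rewrite <- RInt_lincomb by auto. apply RInt_ext. intros. R_eq; ring.
Qed.

Lemma abs_RL_bracket_left_le (f f' g l : R -> R) (a m al q G : R) :
  a < m -> 0 < al -> 1 < q ->
  (forall t, a <= t <= m -> derivable_pt_lim f t (f' t)) ->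
  (forall t, continuous l t) -> (forall t, 0 < l t) ->
  (forall t, a <= t <= m -> Rabs (f' t) <= l t) ->
  (forall t, a < t <= m -> continuous g t /\ Rabs (g t) <= G) ->
  Rabs (f m * improper_left (fun t => Rpower (t - a) (al - 1) * g t) a m
        - improper_left (fun t => Rpower (t - a) (al - 1) * (f t * g t)) a m)
  <= G * (weight_norm al (q / (q - 1)) (m - a) *
          Rpower (RInt (fun t => Rpower (l t) q) a m) (/ q)).
Proof.
  intros Ham Hal Hq Hf Hl Hl0 Hfl Hg.
  assert (Cf : forall t, a <= t <= m -> continuity_pt f t)
    by (intros t Ht; apply derivable_continuous_pt; exists (f' t); apply Hf, Ht).
  destruct (continuous_on_bounded f a m ltac:(lra) Cf) as [Mf HMf].
  assert (Hfg : forall t, a < t <= m -> continuous (fun t => f t * g t) t /\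
                                         Rabs (f t * g t) <= Mf * G).
  { intros t Ht. destruct (Hg t Ht). split.
    - apply (continuous_mult f g); [apply continuity_pt_filterlim, Cf; lra | auto].
    - rewrite Rabs_mult. apply Rmult_le_compat; try apply Rabs_pos; auto. apply HMf. lra. }
  apply (right_lim_abs_le
           (fun x => f m * Rint (fun t => Rpower (t - a) (al - 1) * g t) x m
                     - Rint (fun t => Rpower (t - a) (al - 1) * (f t * g t)) x m) a _ _ (m - a)).
  - apply right_lim_lincomb; apply improper_left_spec.
    + now apply (right_lim_Rint_Rpower_shift_mult g a m al G).
    + now apply (right_lim_Rint_Rpower_shift_mult (fun t => f t * g t) a m al (Mf * G)).
  - lra.
  - intros x Hx. rewrite Rint_weight_bracket.
    + apply (abs_RInt_weight_diff_le f f'); auto. lra.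
    + lra.
    + intros t Ht. split; [apply continuity_pt_filterlim, Cf | apply Hg]; lra.
Qed.

Lemma interior_segment (I : R -> Prop) (a b : R) : is_interval I ->
  interior I a -> interior I b -> forall t, a <= t <= b -> interior I t.
Proof.
  intros HI [da Ha] [db Hb] t Ht.
  assert (Ia : I a) by (apply Ha; unfold disc; rewrite Rminus_diag, Rabs_R0; apply cond_pos).
  assert (Ib : I b) by (apply Hb; unfold disc; rewrite Rminus_diag, Rabs_R0; apply cond_pos).
  assert (Hd : 0 < Rmin da db) by (apply Rmin_pos; apply cond_pos).
  exists (mkposreal _ Hd). intros y Hy. unfold disc in *. simpl in Hy. apply Rabs_def2 in Hy.
  pose proof (Rmin_l da db). pose proof (Rmin_r da db).
  destruct (Rlt_or_le y a); [apply Ha; apply Rabs_def1; lra |].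
  destruct (Rlt_or_le b y); [apply Hb; apply Rabs_def1; lra |].
  apply (HI a y b); auto.
Qed.

Lemma continuous_of_limit1_in_open (g : R -> R) (a b t : R) :
  (forall x, a <= x <= b -> limit1_in g (fun y => a <= y <= b) (g x) x) ->
  a < t < b -> continuous g t.
Proof.
  intros Hg Ht. apply continuity_pt_filterlim. intros eps He.
  destruct (Hg t ltac:(lra) eps He) as [alp [Ha Hb]].
  exists (Rmin alp (Rmin (t - a) (b - t))).
  pose proof (Rmin_l alp (Rmin (t - a) (b - t))). pose proof (Rmin_r alp (Rmin (t - a) (b - t))).
  pose proof (Rmin_l (t - a) (b - t)). pose proof (Rmin_r (t - a) (b - t)).
  split; [apply Rmin_pos; [| apply Rmin_pos]; lra |].
  intros x [_ Hd]. apply Hb. simpl in *. unfold R_dist in *.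
  apply Rabs_def2 in Hd. split; [lra | apply Rabs_def1; lra].
Qed.

Lemma abs_clamp_sub_le (a b x y : R) : a <= b ->
  Rabs (Rmax a (Rmin b x) - Rmax a (Rmin b y)) <= Rabs (x - y).
Proof.
  intros Hab. pose proof (Rle_abs (x - y)). pose proof (Rle_abs (- (x - y))).
  rewrite Rabs_Ropp in *. unfold Rmax, Rmin.
  repeat destruct Rle_dec; apply Rabs_le; lra.
Qed.

(* Composing with the clamp to [a,b] turns continuity within [a,b] into continuity on R. *)
Lemma bounded_of_limit1_in (g : R -> R) (a b : R) : a < b ->
  (forall x, a <= x <= b -> limit1_in g (fun y => a <= y <= b) (g x) x) ->
  exists M, forall t, a <= t <= b -> Rabs (g t) <= M.
Proof.
  intros Hab Hg.
  set (c := fun t => Rmax a (Rmin b t)).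
  assert (Hc : forall t, a <= c t <= b)
    by (intros; unfold c, Rmax, Rmin; repeat destruct Rle_dec; lra).
  assert (Hcid : forall t, a <= t <= b -> c t = t)
    by (intros; unfold c, Rmax, Rmin; repeat destruct Rle_dec; lra).
  assert (C : forall t, continuity_pt (fun t => g (c t)) t).
  { intros t eps He. destruct (Hg _ (Hc t) eps He) as [alp [Ha Hb]].
    exists alp. split; auto. intros x [_ Hd]. simpl in *. unfold R_dist in *.
    destruct (Req_dec (c x) (c t)) as [E | E]; [rewrite E, Rminus_diag, Rabs_R0; lra |].
    apply Hb. split; auto. eapply Rle_lt_trans; [apply abs_clamp_sub_le; lra | auto]. }
  destruct (continuity_ab_maj (fun t => Rabs (g (c t))) a b ltac:(lra)) as [Mx [HM _]].
  - intros t _. apply (continuity_pt_comp (fun t => g (c t)) Rabs);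
      [apply C | apply Rcontinuity_abs].
  - exists (Rabs (g (c Mx))). intros t Ht. specialize (HM t Ht). now rewrite Hcid in HM.
Qed.

Lemma abs_le_supnorm (g : R -> R) (a b : R) : a < b ->
  (forall x, a <= x <= b -> limit1_in g (fun y => a <= y <= b) (g x) x) ->
  forall t, a <= t <= b -> Rabs (g t) <= supnorm g a b.
Proof.
  intros Hab Hg t Ht.
  destruct (bounded_of_limit1_in g a b Hab Hg) as [M HM].
  set (E := fun y => exists x, a <= x <= b /\ y = Rabs (g x)).
  assert (Hex : exists s, is_lub E s).
  { destruct (completeness E) as [s Hs].
    - exists M. intros y [x [Hx ->]]. auto.
    - exists (Rabs (g a)), a. split; [lra | auto].
    - eauto. }
  apply (proj1 (epsilon_spec (inhabits 0) (is_lub E) Hex)). now exists t.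
Qed.

Definition chord (A B a b t : R) : R := ((b - t) * A + (t - a) * B) / (b - a).

(* A continuous, everywhere positive majorant of |f'|: by convexity |f'|^q lies below the
   chord, and e > 0 keeps the q-th root away from 0. *)
Definition envelope (A B a b q e t : R) : R :=
  Rpower ((chord A B a b t + Rabs (chord A B a b t)) / 2 + e) (/ q).

Lemma convex_on_le_chord (h : R -> R) (a b : R) : a < b -> convex_on h a b ->
  forall t, a <= t <= b -> h t <= chord (h a) (h b) a b t.
Proof.
  intros Hab Hc t Ht.
  assert (Hl : 0 <= (b - t) / (b - a) <= 1).
  { split; [apply Rdiv_le_0_compat; lra |].
    apply Rmult_le_reg_r with (b - a); [lra |]. unfold Rdiv. rewrite Rmult_assoc, Rinv_l; lra. }
  specialize (Hc a b _ ltac:(lra) ltac:(lra) Hl).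
  replace ((b - t) / (b - a) * a + (1 - (b - t) / (b - a)) * b) with t in Hc by (field; lra).
  unfold chord. replace (((b - t) * h a + (t - a) * h b) / (b - a))
    with ((b - t) / (b - a) * h a + (1 - (b - t) / (b - a)) * h b) by (field; lra).
  exact Hc.
Qed.

Lemma abs_le_Rpower_of_rpow_le (v c q e : R) : 1 < q -> 0 < e -> rpow (Rabs v) q <= c ->
  Rabs v <= Rpower ((c + Rabs c) / 2 + e) (/ q).
Proof.
  intros Hq He H. destruct (Req_dec v 0) as [-> | Hv].
  { rewrite Rabs_R0. apply Rlt_le, exp_pos. }
  assert (Hp : 0 < Rabs v) by (apply Rabs_pos_lt; auto).
  unfold rpow in H. destruct Rle_dec; [lra |].
  rewrite <- (Rpower_Rinv_K (Rabs v) (/ q)), Rinv_inv by (auto; apply Rinv_neq_0_compat; lra).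
  apply Rle_Rpower_l; [apply Rlt_le, Rinv_0_lt_compat; lra |].
  split; [apply exp_pos | pose proof (Rle_abs c); lra].
Qed.

Lemma continuous_envelope (A B a b q e t : R) : a < b -> 0 < e ->
  continuous (envelope A B a b q e) t.
Proof.
  intros Hab He. unfold envelope.
  assert (Cc : continuous (chord A B a b) t)
    by (apply (ex_derive_continuous (chord A B a b)); unfold chord; auto_derive; lra).
  apply (continuous_Rpower_comp (fun t => (chord A B a b t + Rabs (chord A B a b t)) / 2 + e)).
  - apply (continuous_plus (fun t => (chord A B a b t + Rabs (chord A B a b t)) / 2) (fun _ => e));
      [| apply continuous_const].
    apply (continuous_ext (fun t => / 2 * (chord A B a b t + Rabs (chord A B a b t))));
      [intros s; unfold Rdiv; apply Rmult_comm |].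
    apply (continuous_scal_r (/ 2) (fun t => chord A B a b t + Rabs (chord A B a b t))).
    apply (continuous_plus (chord A B a b) (fun t => Rabs (chord A B a b t))); auto.
    apply (continuous_comp (chord A B a b) Rabs); [auto | apply continuous_Rabs].
  - pose proof (Rle_abs (- chord A B a b t)). rewrite Rabs_Ropp in *. lra.
Qed.

Lemma RInt_envelope_pow (A B a b q e : R) : a < b -> 0 <= A -> 0 <= B -> 0 < e -> 1 < q ->
  RInt (fun t => Rpower (envelope A B a b q e t) q) a ((a + b) / 2)
    = (b - a) / 8 * (3 * A + B + 4 * e) /\
  RInt (fun t => Rpower (envelope A B a b q e t) q) ((a + b) / 2) b
    = (b - a) / 8 * (A + 3 * B + 4 * e).
Proof.
  intros Hab HA HB He Hq.
  assert (Ext : forall c d, a <= c <= d -> d <= b ->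
     RInt (fun t => Rpower (envelope A B a b q e t) q) c d
     = RInt (fun t => chord A B a b t + e) c d).
  { intros c d Hc Hd. apply RInt_ext. intros t Ht.
    rewrite Rmin_left, Rmax_right in Ht by lra.
    assert (0 <= chord A B a b t)
      by (apply Rdiv_le_0_compat; [apply Rplus_le_le_0_compat; apply Rmult_le_pos |]; lra).
    unfold envelope. rewrite Rabs_right, Rpower_Rinv_K by lra. R_eq; lra. }
  set (P := fun t => (- (b - t) ^ 2 * A + (t - a) ^ 2 * B) / (2 * (b - a)) + e * t).
  assert (IP : forall c d, is_RInt (fun t => chord A B a b t + e) c d (P d - P c)).
  { intros c d. apply (is_RInt_derive (V := R_CompleteNormedModule) P); intros x Hx.
    - unfold P, chord. auto_derive; [lra | field; lra].
    - apply (ex_derive_continuous (fun t => chord A B a b t + e)). unfold chord. auto_derive. lra. }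
  split; rewrite Ext, (is_RInt_unique _ _ _ _ (IP _ _)) by lra; unfold P; R_eq; field; lra.
Qed.

Lemma weight_norm_scaling (G h al q Gm : R) : 0 < h -> 0 < al -> 1 < q -> 0 < Gm ->
  G * Rpower h (al + 1) / (Rpower 2 (al + 1 + 2 / q) * Rpower (al * (q / (q - 1)) + 1)
                             (1 / (q / (q - 1))) * (al * Gm))
  = / Gm * G * weight_norm al (q / (q - 1)) (h / 2) * Rpower (h / 8) (/ q).
Proof.
  intros Hh Hal Hq HG.
  replace (/ Gm * G * weight_norm al (q / (q - 1)) (h / 2) * Rpower (h / 8) (/ q))
    with (G * (/ Gm * weight_norm al (q / (q - 1)) (h / 2) * Rpower (h / 8) (/ q))) by ring.
  unfold Rdiv at 1. rewrite Rmult_assoc. f_equal. symmetry.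
  unfold weight_norm. set (p := q / (q - 1)).
  destruct (conjugate_exponent q Hq) as [Hp Hpq]. fold p in Hp, Hpq.
  assert (Hp1 : 0 < al * p + 1) by nra.
  assert (L1 : ln (h / 2) = ln h - ln 2) by (apply ln_div; lra).
  assert (L2 : ln (h / 8) = ln h - 3 * ln 2).
  { rewrite ln_div by lra. replace 8 with (2 * (2 * 2)) by ring. rewrite !ln_mult by lra. ring. }
  assert (L3 : ln (Rpower (h / 2) (al * p + 1) / ((al * p + 1) * Rpower al p)) =
               (al * p + 1) * (ln h - ln 2) - ln (al * p + 1) - p * ln al).
  { rewrite ln_div, ln_mult, !ln_Rpower, L1
      by (try apply Rmult_lt_0_compat; try apply exp_pos; lra).
    ring. }
  replace (al * Gm) with (exp (ln al + ln Gm)) by (rewrite exp_plus, !exp_ln; lra).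
  replace (/ Gm) with (exp (- ln Gm)) by (rewrite exp_Ropp, exp_ln; lra).
  assert (RD : forall x y, Rpower x y = exp (y * ln x)) by reflexivity.
  rewrite (RD _ (/ p)), L3, (RD (h / 8)), L2, !RD.
  rewrite <- !exp_plus, <- exp_Ropp, <- exp_plus. f_equal.
  unfold Rdiv. replace (/ q) with (1 - / p) by lra. field. lra.
Qed.

Lemma le_of_forall_pos_Rpower (X K h c1 c2 y : R) :
  0 <= K -> 0 < h -> 0 <= c1 -> 0 <= c2 -> 0 < y ->
  (forall e, 0 < e -> X <= K * (Rpower (h * (c1 + e)) y + Rpower (h * (c2 + e)) y)) ->
  X <= K * Rpower h y * (rpow c1 y + rpow c2 y).
Proof.
  intros HK Hh Hc1 Hc2 Hy H. set (KR := K * Rpower h y).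
  assert (HKR : 0 <= KR) by (apply Rmult_le_pos; [| apply Rlt_le, exp_pos]; auto).
  apply Rle_plus_epsilon. intros eta Heta.
  set (eta' := eta / (2 * (KR + 1))).
  assert (He' : 0 < eta') by (apply Rdiv_lt_0_compat; lra).
  destruct (rpow_right_continuous c1 y eta' Hc1 Hy He') as [d1 [Hd1 H1]].
  destruct (rpow_right_continuous c2 y eta' Hc2 Hy He') as [d2 [Hd2 H2]].
  pose proof (Rmin_l d1 d2). pose proof (Rmin_r d1 d2). pose proof (Rmin_pos d1 d2 Hd1 Hd2).
  set (e := Rmin d1 d2 / 2). assert (He : 0 < e < Rmin d1 d2) by (unfold e; lra).
  specialize (H e ltac:(lra)). specialize (H1 e ltac:(lra)). specialize (H2 e ltac:(lra)).
  rewrite <- !Rpower_mult_distr in H by lra. fold KR in H.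
  replace (K * (Rpower h y * Rpower (c1 + e) y + Rpower h y * Rpower (c2 + e) y))
    with (KR * (Rpower (c1 + e) y + Rpower (c2 + e) y)) in H by (unfold KR; ring).
  assert (KR * (Rpower (c1 + e) y + Rpower (c2 + e) y) <=
          KR * (rpow c1 y + rpow c2 y) + KR * (2 * eta'))
    by (rewrite <- Rmult_plus_distr_l; apply Rmult_le_compat_l; lra).
  assert (KR * (2 * eta') <= eta).
  { unfold eta'. replace (KR * (2 * (eta / (2 * (KR + 1))))) with (eta * (KR / (KR + 1)))
      by (field; lra).
    assert (KR / (KR + 1) <= 1)
      by (apply Rmult_le_reg_r with (KR + 1); [lra |]; unfold Rdiv;
          rewrite Rmult_assoc, Rinv_l; lra).
    nra. }
  lra.
Qed.

Lemma RL_plus_reflect (h : R -> R) (a b al M : R) : a < b -> 0 < al ->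
  (forall t, (a + b) / 2 <= t < b -> continuous h t /\ Rabs (h t) <= M) ->
  RL_plus al h ((a + b) / 2) b = RL_minus al (fun t => h (a + b - t)) ((a + b) / 2) a.
Proof.
  intros Hab Hal H. unfold RL_plus, RL_minus. f_equal.
  exact (improper_right_reflect h a b al M Hab Hal H).
Qed.

Section Bracket.

Variables (f f' g : R -> R) (a b al q G : R).
Hypothesis Hab : a < b.
Hypothesis Hal : 0 < al.
Hypothesis Hq : 1 < q.
Hypothesis Hf : forall t, a <= t <= b -> derivable_pt_lim f t (f' t).
Hypothesis Hg : forall t, a < t < b -> continuous g t.
Hypothesis HG : forall t, a <= t <= b -> Rabs (g t) <= G.
Hypothesis Hconv : convex_on (fun t => rpow (Rabs (f' t)) q) a b.

Local Notation m := ((a + b) / 2).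
Local Notation A := (rpow (Rabs (f' a)) q).
Local Notation B := (rpow (Rabs (f' b)) q).
Local Notation bracket :=
  (f m * (RL_minus al g m a + RL_plus al g m b)
   - (RL_minus al (fun t => f t * g t) m a + RL_plus al (fun t => f t * g t) m b)).

Lemma abs_deriv_le_envelope (e t : R) : 0 < e -> a <= t <= b ->
  Rabs (f' t) <= envelope A B a b q e t.
Proof.
  intros He Ht. apply abs_le_Rpower_of_rpow_le; auto.
  exact (convex_on_le_chord (fun t => rpow (Rabs (f' t)) q) a b Hab Hconv t Ht).
Qed.

Lemma abs_improper_bracket_left_le (e : R) : 0 < e ->
  Rabs (f m * improper_left (fun t => Rpower (t - a) (al - 1) * g t) a m
        - improper_left (fun t => Rpower (t - a) (al - 1) * (f t * g t)) a m)
  <= G * (weight_norm al (q / (q - 1)) ((b - a) / 2) *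
          Rpower ((b - a) / 8 * (3 * A + B + 4 * e)) (/ q)).
Proof.
  intros He.
  destruct (RInt_envelope_pow A B a b q e) as [IL _]; try apply rpow_nonneg; auto.
  rewrite <- IL. replace ((b - a) / 2) with (m - a) by field.
  apply (abs_RL_bracket_left_le f f'); try lra.
  - intros t Ht. apply Hf. lra.
  - intros t. now apply continuous_envelope.
  - intros t. apply exp_pos.
  - intros t Ht. apply abs_deriv_le_envelope; lra.
  - intros t Ht. split; [apply Hg | apply HG]; lra.
Qed.

Lemma abs_improper_bracket_right_le (e : R) : 0 < e ->
  Rabs (f m * improper_left (fun t => Rpower (t - a) (al - 1) * g (a + b - t)) a m
        - improper_left
            (fun t => Rpower (t - a) (al - 1) * (f (a + b - t) * g (a + b - t))) a m)
  <= G * (weight_norm al (q / (q - 1)) ((b - a) / 2) *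
          Rpower ((b - a) / 8 * (A + 3 * B + 4 * e)) (/ q)).
Proof.
  intros He. set (l := envelope A B a b q e).
  assert (Cl : forall t, continuous l t) by (intros; now apply continuous_envelope).
  destruct (RInt_envelope_pow A B a b q e) as [_ IR]; try apply rpow_nonneg; auto.
  fold l in IR. rewrite <- IR.
  rewrite (RInt_reflect _ (a + b)) by
    (apply ex_RInt_continuous_on; [lra |]; intros;
     apply continuous_Rpower_comp; auto; apply exp_pos).
  replace (a + b - b) with a by ring. replace (a + b - m) with m by field.
  replace ((b - a) / 2) with (m - a) by field.
  replace (f m) with ((fun s => f (a + b - s)) m) by (cbv beta; f_equal; field).
  apply (abs_RL_bracket_left_le (fun s => f (a + b - s)) (fun s => - f' (a + b - s))
                                (fun s => g (a + b - s))
                                (fun s => l (a + b - s))); try lra.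
  - intros t Ht. replace (- f' (a + b - t)) with (f' (a + b - t) * (-1)) by ring.
    apply (derivable_pt_lim_comp (fun s => a + b - s) f); [| apply Hf; lra].
    replace (-1) with (0 - 1) by ring.
    apply derivable_pt_lim_minus; [apply derivable_pt_lim_const | apply derivable_pt_lim_id].
  - intros t. apply (continuous_comp (fun s => a + b - s) l); [apply continuous_const_minus | auto].
  - intros t. apply exp_pos.
  - intros t Ht. rewrite Rabs_Ropp. apply abs_deriv_le_envelope; lra.
  - intros t Ht. split; [| apply HG; lra].
    apply (continuous_comp (fun s => a + b - s) g); [apply continuous_const_minus | apply Hg; lra].
Qed.

Lemma abs_RL_bracket_le_envelope (e : R) : 0 < e ->
  Rabs bracket <= / Gamma al * G * weight_norm al (q / (q - 1)) ((b - a) / 2) *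
    (Rpower ((b - a) / 8 * (3 * A + B + 4 * e)) (/ q)
     + Rpower ((b - a) / 8 * (A + 3 * B + 4 * e)) (/ q)).
Proof.
  intros He.
  assert (HGam : 0 < / Gamma al) by now apply Rinv_0_lt_compat, Gamma_pos.
  assert (Cf : forall t, a <= t <= b -> continuity_pt f t)
    by (intros t Ht; apply derivable_continuous_pt; exists (f' t); apply Hf, Ht).
  destruct (continuous_on_bounded f a b ltac:(lra) Cf) as [Mf HMf].
  assert (Hgb : forall t, m <= t < b -> continuous g t /\ Rabs (g t) <= G)
    by (intros t Ht; split; [apply Hg | apply HG]; lra).
  assert (Hfgb : forall t, m <= t < b ->
            continuous (fun t => f t * g t) t /\ Rabs (f t * g t) <= Mf * G).
  { intros t Ht. split.
    - apply (continuous_mult f g); [apply continuity_pt_filterlim, Cf | apply Hg]; lra.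
    - rewrite Rabs_mult. apply Rmult_le_compat; try apply Rabs_pos; [apply HMf | apply HG]; lra. }
  rewrite (RL_plus_reflect g a b al G), (RL_plus_reflect (fun t => f t * g t) a b al (Mf * G))
    by auto.
  unfold RL_minus. cbv beta.
  pose proof (abs_improper_bracket_left_le e He) as XL.
  pose proof (abs_improper_bracket_right_le e He) as XR.
  set (V1 := improper_left (fun t => Rpower (t - a) (al - 1) * g t) a m) in *.
  set (V2 := improper_left (fun t => Rpower (t - a) (al - 1) * g (a + b - t)) a m) in *.
  set (V3 := improper_left (fun t => Rpower (t - a) (al - 1) * (f t * g t)) a m) in *.
  set (V4 := improper_left (fun t => Rpower (t - a) (al - 1) *
                                     (f (a + b - t) * g (a + b - t))) a m) in *.
  replace (f m * (/ Gamma al * V1 + / Gamma al * V2) - (/ Gamma al * V3 + / Gamma al * V4))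
    with (/ Gamma al * ((f m * V1 - V3) + (f m * V2 - V4))) by ring.
  rewrite Rabs_mult, Rabs_right by lra.
  pose proof (Rabs_triang (f m * V1 - V3) (f m * V2 - V4)).
  rewrite !Rmult_assoc. apply Rmult_le_compat_l; [lra |].
  rewrite Rmult_plus_distr_l. lra.
Qed.

Lemma abs_RL_bracket_le :
  Rabs bracket <= / Gamma al * G * weight_norm al (q / (q - 1)) ((b - a) / 2) *
    Rpower ((b - a) / 8) (/ q) * (rpow (3 * A + B) (/ q) + rpow (A + 3 * B) (/ q)).
Proof.
  pose proof (rpow_nonneg (Rabs (f' a)) q). pose proof (rpow_nonneg (Rabs (f' b)) q).
  assert (HG0 : 0 <= G) by (pose proof (Rabs_pos (g a)); specialize (HG a); lra).
  apply le_of_forall_pos_Rpower; try lra.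
  - repeat apply Rmult_le_pos; try apply Rlt_le, exp_pos; auto.
    apply Rlt_le, Rinv_0_lt_compat, Gamma_pos, Hal.
  - apply Rinv_0_lt_compat. lra.
  - intros e He. replace (3 * A + B + e) with (3 * A + B + 4 * (e / 4)) by field.
    replace (A + 3 * B + e) with (A + 3 * B + 4 * (e / 4)) by field.
    apply abs_RL_bracket_le_envelope. lra.
Qed.

End Bracket.

Theorem theorem2p6 (I : R -> Prop) (f f' g : R -> R) (a b al q : R) :
  is_interval I ->
  (forall x, interior I x -> derivable_pt_lim f x (f' x)) ->
  interior I a -> interior I b -> a < b ->
  Riemann_integrable f' a b ->
  (forall x, a <= x <= b -> limit1_in g (fun y => a <= y <= b) (g x) x) ->
  0 < al -> 1 < q ->
  let p := q / (q - 1) in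
  let m := (a + b) / 2 in
  convex_on (fun t => rpow (Rabs (f' t)) q) a b ->
  Rabs (f m * (RL_minus al g m a + RL_plus al g m b)
        - (RL_minus al (fun t => f t * g t) m a
           + RL_plus al (fun t => f t * g t) m b))
  <= supnorm g a b * Rpower (b - a) (al + 1)
     / (Rpower 2 (al + 1 + 2 / q) * Rpower (al * p + 1) (1 / p) * Gamma (al + 1))
     * (rpow (3 * rpow (Rabs (f' a)) q + rpow (Rabs (f' b)) q) (1 / q)
        + rpow (rpow (Rabs (f' a)) q + 3 * rpow (Rabs (f' b)) q) (1 / q)).
Proof.
  intros HI Hder Ha Hb Hab _ Hg Hal Hq p m Hconv.
  eapply Rle_trans.
  { apply (abs_RL_bracket_le f f' g a b al q (supnorm g a b)); auto.
    - intros t Ht. apply Hder, (interior_segment I a b); auto.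
    - intros t Ht. now apply (continuous_of_limit1_in_open g a b).
    - now apply abs_le_supnorm. }
  unfold p. replace (1 / q) with (/ q) by (field; lra).
  rewrite Gamma_succ, weight_norm_scaling by (try apply Gamma_pos; lra).
  lra.
Qed.
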